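(* Let $\mathbb{Z}[s,u]$ be the polynomial ring in variables $s$ (of degree $4$) and $u$ (of degree $2$). Let $I_2=(3u^4-3su^2+s^2,\ u^6)$ and $J_2=(s^2+su^2+u^4,\ u^6)$. Then the graded rings $\mathbb{Z}[s,u]/I_2$ and $\mathbb{Z}[s,u]/J_2$ are isomorphic.
   Context: In the paper $s$ is written $y_1^2$ with $y_1$ of degree $2$. *)

From HB Require Import structures.
From mathcomp Require Import all_boot all_algebra.
From mathcomp Require Import ring_quotient generic_quotient.
From mathcomp Require Import mpoly.
From Stdlib Require Import ClassicalEpsilon.

Set Implicit Arguments.
Unset Strict Implicit.
Unset Printing Implicit Defensive.

Import GRing.Theory.
Local Open Scope ring_scope.

Notation Zsu := {mpoly int[2]}.
Definition s : Zsu := 'X_(ord0 : 'I_2).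
Definition u : Zsu := 'X_(ord_max : 'I_2).

Definition wdeg (m : 'X_{1..2}) : nat := (4 * m (ord0 : 'I_2) + 2 * m (ord_max : 'I_2))%N.

Definition homogeneous (d : nat) (p : Zsu) : Prop :=
  forall m, m \in msupp p -> wdeg m = d.

Definition in_ideal2 (g1 g2 : Zsu) (p : Zsu) : bool :=
  if excluded_middle_informative (exists a b : Zsu, p = a * g1 + b * g2)
  then true else false.

Lemma in_ideal2P g1 g2 p :
  reflect (exists a b : Zsu, p = a * g1 + b * g2) (in_ideal2 g1 g2 p).
Proof.
rewrite /in_ideal2; case: excluded_middle_informative => H; by constructor.
Qed.

Definition zero2 : 'I_2 -> int := fun _ => 0.

Lemma ideal2_closed g1 g2 :
  g1.@[zero2] = 0 -> g2.@[zero2] = 0 -> idealr_closed (in_ideal2 g1 g2).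
Proof.
move=> h1 h2; split.
- by apply/in_ideal2P; exists 0, 0; rewrite !mul0r addr0.
- apply/in_ideal2P => -[a [b /(congr1 (fun q : Zsu => q.@[zero2]))]].
  by rewrite mevalD !mevalM h1 h2 !mulr0 addr0 mevalC => /eqP; rewrite oner_eq0.
- move=> c p q /in_ideal2P [a [b ->]] /in_ideal2P [a' [b' ->]].
  apply/in_ideal2P; exists (c * a + a'), (c * b + b').
  by rewrite mulrDr !mulrDl !mulrA; rewrite addrACA.
Qed.

Definition I2g1 : Zsu := 3%:R * u ^+ 4 - 3%:R * s * u ^+ 2 + s ^+ 2.
Definition J2g1 : Zsu := s ^+ 2 + s * u ^+ 2 + u ^+ 4.
Definition g6 : Zsu := u ^+ 6.

Lemma I2g1_0 : I2g1.@[zero2] = 0.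
Proof.
rewrite /I2g1 /s /u !(mevalD, mevalB, mevalN, mevalM, rmorphXn, rmorph_nat, mevalXU) /zero2
  /= !(mulr0, mul0r, subrr, addr0) //.
Qed.

Lemma J2g1_0 : J2g1.@[zero2] = 0.
Proof.
by rewrite /J2g1 /s /u !(mevalD, mevalB, mevalN, mevalM, rmorphXn, rmorph_nat, mevalXU) /zero2
  /= !(mulr0, mul0r, addr0) //.
Qed.

Lemma g6_0 : g6.@[zero2] = 0.
Proof. by rewrite /g6 /u !(mevalM, rmorphXn, mevalXU) /zero2 /= !(mulr0, mul0r). Qed.

Definition I2 : {pred Zsu} := fun p => in_ideal2 I2g1 g6 p.
Definition J2 : {pred Zsu} := fun p => in_ideal2 J2g1 g6 p.

HB.instance Definition _ := isIdealr.Build Zsu I2 (ideal2_closed I2g1_0 g6_0).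
HB.instance Definition _ := isIdealr.Build Zsu J2 (ideal2_closed J2g1_0 g6_0).

(* The quotient rings Z[s,u]/I_2 and Z[s,u]/J_2 (graded by deg s = 4, deg u = 2;
   both ideals are homogeneous). *)
Notation QI2 := {ideal_quot I2}.
Notation QJ2 := {ideal_quot J2}.

Definition graded_piece (Q : Type) (pi : Zsu -> Q) (d : nat) (x : Q) : Prop :=
  exists p : Zsu, homogeneous d p /\ x = pi p.

Definition graded_ring_iso (f : {rmorphism QI2 -> QJ2}) : Prop :=
  bijective f /\
  forall (d : nat) (x : QI2),
    graded_piece (\pi_QI2%qT) d x <-> graded_piece (\pi_QJ2%qT) d (f x).

(** The substitution [s |-> s + 2 u^2] fixing [u] is a ring automorphism of
    Z[s,u] (its inverse is [s |-> s - 2 u^2]) which preserves the grading,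
    since [s] and [u^2] both have degree 4.  It sends [3u^4 - 3su^2 + s^2] to
    [s^2 + su^2 + u^4] and fixes [u^6], so it maps [I_2] onto [J_2] and
    descends to a graded isomorphism of the quotients. *)

From HB Require Import structures.
From mathcomp Require Import all_boot all_algebra.
From mathcomp Require Import ring_quotient generic_quotient.
From mathcomp Require Import mpoly.
From mathcomp Require Import ring.
Set Implicit Arguments.
Unset Strict Implicit.
Unset Printing Implicit Defensive.

Import GRing.Theory.
Local Open Scope ring_scope.
Local Open Scope quotient_scope.

Lemma homogeneous0 d : homogeneous d 0.
Proof. by move=> m; rewrite msupp0. Qed.

Lemma homogeneous1 : homogeneous 0 1.
Proof. by move=> m; rewrite msupp1 inE => /eqP ->; rewrite /wdeg !mnm0E. Qed.

Lemma homogeneousD d p q :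
  homogeneous d p -> homogeneous d q -> homogeneous d (p + q).
Proof. by move=> hp hq m /msuppD_le; rewrite mem_cat => /orP[/hp|/hq]. Qed.

Lemma homogeneousZ d c p : homogeneous d p -> homogeneous d (c *: p).
Proof. by move=> hp m /msuppZ_le /hp. Qed.

Lemma homogeneousM d1 d2 p q :
  homogeneous d1 p -> homogeneous d2 q -> homogeneous (d1 + d2) (p * q).
Proof.
move=> hp hq m /msuppM_le /allpairsP [[m1 m2] /= [/hp <- /hq <- ->]].
by rewrite /wdeg !mnmDE !mulnDr addnACA.
Qed.

Lemma homogeneousX d p k : homogeneous d p -> homogeneous (d * k) (p ^+ k).
Proof.
move=> hp; elim: k => [|k IHk]; first by rewrite muln0 expr0; apply: homogeneous1.
by rewrite exprS mulnS; apply: homogeneousM.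
Qed.

Lemma homogeneous_sum d (r : seq 'X_{1..2}) (F : 'X_{1..2} -> Zsu) :
  (forall m, m \in r -> homogeneous d (F m)) -> homogeneous d (\sum_(m <- r) F m).
Proof.
move=> hF; rewrite big_seq; elim/big_rec: _ => [|m p /hF]; first exact: homogeneous0.
exact: homogeneousD.
Qed.

Lemma homogeneous_s : homogeneous 4 s.
Proof. by move=> m; rewrite msuppX inE => /eqP ->; rewrite /wdeg !mnm1E. Qed.

Lemma homogeneous_u : homogeneous 2 u.
Proof. by move=> m; rewrite msuppX inE => /eqP ->; rewrite /wdeg !mnm1E. Qed.

Lemma homogeneous_comp (lq : 2.-tuple Zsu) d p :
  homogeneous 4 (tnth lq ord0) -> homogeneous 2 (tnth lq ord_max) ->
  homogeneous d p -> homogeneous d (p \mPo lq).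
Proof.
move=> hs hu hp; rewrite comp_mpolyEX; apply: homogeneous_sum => m /hp <-.
apply: homogeneousZ; rewrite comp_mpolyX !big_ord_recl big_ord0 mulr1 /wdeg.
rewrite (_ : lift ord0 ord0 = ord_max); last exact: val_inj.
by apply: homogeneousM; apply: homogeneousX.
Qed.

Lemma comp_mpolyA (n k l : nat) (R : comNzRingType) (lq : n.-tuple {mpoly R[k]})
    (lr : k.-tuple {mpoly R[l]}) (p : {mpoly R[n]}) :
  (p \mPo lq) \mPo lr = p \mPo [tuple ('X_i \mPo lq) \mPo lr | i < n].
Proof.
rewrite (comp_mpolyEX p lq) raddf_sum [RHS]comp_mpolyEX; apply: eq_bigr => m _.
rewrite -[LHS]/((_ *: _) \mPo lr) comp_mpolyZ comp_mpolyX rmorph_prod /= comp_mpolyX.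
congr (_ *: _); apply: eq_bigr => i _.
by rewrite rmorphXn tnth_map tnth_ord_tuple comp_mpolyXU -tnth_nth.
Qed.

Lemma comp_mpoly_idE (n : nat) (R : comNzRingType) (lq : n.-tuple {mpoly R[n]})
    (p : {mpoly R[n]}) :
  (forall i, tnth lq i = 'X_i) -> p \mPo lq = p.
Proof.
move=> lqX; rewrite -[RHS]comp_mpoly_id; congr (p \mPo _).
by apply: eq_from_tnth => i; rewrite lqX tnth_map tnth_ord_tuple.
Qed.

Lemma ord2P (i : 'I_2) : i = ord0 \/ i = ord_max.
Proof. by case: i => -[|[|//]] ?; [left | right]; apply: val_inj. Qed.

Definition shear_tuple (c : int) : 2.-tuple Zsu := [tuple s + c *: u ^+ 2; u].
Definition shear (c : int) : {rmorphism Zsu -> Zsu} :=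
  GRing.RMorphism.clone _ _ (comp_mpoly (shear_tuple c)) _.

Lemma shearC c a : shear c a%:MP = a%:MP.
Proof. exact: comp_mpolyC. Qed.

Lemma shear_s c : shear c s = s + c *: u ^+ 2.
Proof. exact: comp_mpolyXU. Qed.
Lemma shear_u c : shear c u = u.
Proof. exact: comp_mpolyXU. Qed.

Lemma shearK c : cancel (shear c) (shear (- c)).
Proof.
(* Rewriting [shear_s] directly under [shear (- c)] would make unification
   unfold both substitutions when comparing them; [congr1] avoids this. *)
have shearKs : shear (- c) (shear c s) = s.
  rewrite (congr1 (shear (- c)) (shear_s c)) rmorphD -mul_mpolyC rmorphM.
  by rewrite rmorphXn shearC shear_s shear_u mul_mpolyC scaleNr addrNK.
have shearKu : shear (- c) (shear c u) = u.
  by rewrite (congr1 (shear (- c)) (shear_u c)) shear_u.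
move=> p; transitivity (p \mPo [tuple shear (- c) (shear c 'X_i) | i < 2]).
  exact: comp_mpolyA.
apply: comp_mpoly_idE => i; rewrite tnth_map tnth_ord_tuple.
by have [-> | ->] := ord2P i; [exact: shearKs | exact: shearKu].
Qed.

Lemma shearNK c : cancel (shear (- c)) (shear c).
Proof. by rewrite -{2}(opprK c); apply: shearK. Qed.

Lemma shear_g6 c : shear c g6 = g6.
Proof. by rewrite rmorphXn shear_u. Qed.

Lemma homogeneous_shear c d p : homogeneous d p -> homogeneous d (shear c p).
Proof.
apply: homogeneous_comp; rewrite (tnth_nth 0) /=; last exact: homogeneous_u.
apply: homogeneousD; first exact: homogeneous_s.
by apply/homogeneousZ/(homogeneousX homogeneous_u).
Qed.

Lemma shear_I2g1 : shear 2 I2g1 = J2g1.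
Proof.
rewrite /I2g1 /J2g1 !(rmorph_nat, rmorphXn, rmorphM, rmorphB, rmorphD).
rewrite shear_s shear_u -mul_mpolyC mpolyC_nat.
ring.
Qed.

Section QuotientMorphism.
Variables (R S : comNzRingType) (I : idealr R) (J : idealr S).
Variable f : {rmorphism R -> S}.
Hypothesis f_ideal : {homo f : p / p \in I >-> p \in J}.

Definition quot_map (x : {ideal_quot I}) : {ideal_quot J} :=
  \pi_{ideal_quot J} (f (repr x)).

Lemma quot_mapE p : quot_map (\pi_{ideal_quot I} p) = \pi_{ideal_quot J} (f p).
Proof.
apply/eqP; rewrite -Quotient.idealrBE -rmorphB f_ideal //.
by rewrite Quotient.idealrBE reprK.
Qed.

Lemma quot_map_is_zmod_morphism : zmod_morphism quot_map.
Proof.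
by move=> x y; rewrite -[x]reprK -[y]reprK -rmorphB !quot_mapE !rmorphB.
Qed.

Lemma quot_map_is_monoid_morphism : monoid_morphism quot_map.
Proof.
split; first by rewrite -(rmorph1 \pi_{ideal_quot I}) quot_mapE !rmorph1.
by move=> x y; rewrite -[x]reprK -[y]reprK -rmorphM !quot_mapE !rmorphM.
Qed.

End QuotientMorphism.

Arguments quot_map {R S} I J f x.

Lemma quot_mapK (R S : comNzRingType) (I : idealr R) (J : idealr S)
    (f : {rmorphism R -> S}) (g : {rmorphism S -> R}) :
  {homo f : p / p \in I >-> p \in J} -> {homo g : p / p \in J >-> p \in I} ->
  cancel f g -> cancel (quot_map I J f) (quot_map J I g).
Proof. by move=> fIJ gJI fK x; rewrite -[x]reprK (quot_mapE fIJ) (quot_mapE gJI) fK. Qed.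

Lemma in_ideal2_rmorph (f : {rmorphism Zsu -> Zsu}) g1 g2 p :
  in_ideal2 g1 g2 p -> in_ideal2 (f g1) (f g2) (f p).
Proof.
move=> /in_ideal2P [a [b ->]]; apply/in_ideal2P; exists (f a), (f b).
by rewrite rmorphD !rmorphM.
Qed.

Lemma shear_I2_J2 : {homo shear 2 : p / p \in I2 >-> p \in J2}.
Proof.
move=> p /(in_ideal2_rmorph (shear 2)); rewrite shear_I2g1 shear_g6; exact.
Qed.

Lemma shear_J2_I2 : {homo shear (- 2) : p / p \in J2 >-> p \in I2}.
Proof.
move=> p /(in_ideal2_rmorph (shear (- 2))).
by rewrite -shear_I2g1 shearK shear_g6.
Qed.

Lemma graded_piece_quot_map (I J : idealr Zsu) (f g : {rmorphism Zsu -> Zsu}) :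
    {homo f : p / p \in I >-> p \in J} -> {homo g : p / p \in J >-> p \in I} ->
    cancel f g ->
    (forall d p, homogeneous d p -> homogeneous d (f p)) ->
    (forall d p, homogeneous d p -> homogeneous d (g p)) ->
  forall d x, graded_piece \pi_{ideal_quot I} d x <->
              graded_piece \pi_{ideal_quot J} d (quot_map I J f x).
Proof.
move=> fIJ gJI fK f_homog g_homog d x; split.
  by case=> p [hp ->]; exists (f p); rewrite (quot_mapE fIJ); split; [exact: f_homog|].
case=> q [hq hx]; exists (g q); split; first exact: g_homog.
by rewrite -(quot_mapE gJI) -hx (quot_mapK fIJ gJI fK).
Qed.

Definition shear_quot : QI2 -> QJ2 := quot_map I2 J2 (shear 2).

HB.instance Definition _ := GRing.isZmodMorphism.Build QI2 QJ2 shear_quot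
  (quot_map_is_zmod_morphism shear_I2_J2).
HB.instance Definition _ := GRing.isMonoidMorphism.Build QI2 QJ2 shear_quot
  (quot_map_is_monoid_morphism shear_I2_J2).

Theorem proposition5p4 : exists f : {rmorphism QI2 -> QJ2}, graded_ring_iso f.
Proof.
have fIJ := shear_I2_J2; have gJI := shear_J2_I2.
exists shear_quot; split.
  by exists (quot_map J2 I2 (shear (- 2))); apply: quot_mapK => //;
    [exact: shearK | exact: shearNK].
by apply: graded_piece_quot_map (shearK 2) _ _ => //; exact: homogeneous_shear.
Qed.
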